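(* Let $H$ be a 5-vertex $K_4^{3-}$-free 3-graph whose shadow graph is complete. Then $H$ is isomorphic to $C_5$ or to $F_{3,2}$.
   Context: A 3-graph is a 3-uniform hypergraph. $K_4^{3-}$ has vertex set $[4]$ and edges $123,124,134$; $C_5$ has vertex set $[5]$ and edges $123,234,345,145,125$; $F_{3,2}$ has vertex set $[5]$ and edges $123,145,245,345$. $H$ is $F$-free if it has no (not necessarily induced) subhypergraph isomorphic to $F$. The shadow graph of $H$ is the graph on $V(H)$ in which a pair is an edge iff it is contained in some edge of $H$; it is complete if every pair of vertices is such an edge. *)

From mathcomp Require Import all_boot.
Set Implicit Arguments. Unset Strict Implicit. Unset Printing Implicit Defensive.

Definition is_3graph (V : finType) (E : {set {set V}}) : Prop :=
  forall e, e \in E -> #|e| = 3.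

Definition edge_img (V W : finType) (f : V -> W) (e : {set V}) : {set W} := f @: e.

Definition contains_copy (U V : finType) (F : {set {set U}}) (H : {set {set V}}) : Prop :=
  exists f : U -> V, injective f /\ forall e, e \in F -> edge_img f e \in H.

Definition free_of (U V : finType) (F : {set {set U}}) (H : {set {set V}}) : Prop :=
  ~ contains_copy F H.

Definition isomorphic (U V : finType) (H : {set {set U}}) (G : {set {set V}}) : Prop :=
  exists f : U -> V, bijective f /\ forall e : {set U}, (edge_img f e \in G) = (e \in H).

Definition shadow_complete (V : finType) (H : {set {set V}}) : Prop :=
  forall x y : V, x != y -> exists2 e, e \in H & (x \in e) && (y \in e).

(* The specific 3-graphs, with vertex [n] encoded as ordinal n-1. *)
Definition v4 (i : nat) : 'I_4 := inord i.
Definition v5 (i : nat) : 'I_5 := inord i.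

Definition K43minus : {set {set 'I_4}} :=
  [set [set v4 0; v4 1; v4 2]; [set v4 0; v4 1; v4 3]; [set v4 0; v4 2; v4 3]].

Definition C5 : {set {set 'I_5}} :=
  [set [set v5 0; v5 1; v5 2]; [set v5 1; v5 2; v5 3]; [set v5 2; v5 3; v5 4];
       [set v5 0; v5 3; v5 4]; [set v5 0; v5 1; v5 4]].

Definition F32 : {set {set 'I_5}} :=
  [set [set v5 0; v5 1; v5 2]; [set v5 0; v5 3; v5 4]; [set v5 1; v5 3; v5 4];
       [set v5 2; v5 3; v5 4]].

From mathcomp Require Import all_boot.
Set Implicit Arguments. Unset Strict Implicit. Unset Printing Implicit Defensive.

(* After relabelling the vertices by 'I_5, a 3-graph is one of the 2^10 sets
   of 3-subsets of 'I_5.  Encoding such a set as a list of vertex-ordered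
   triples turns complete shadow, K_4^{3-}-freeness and isomorphism to C_5 or
   F_{3,2} into boolean tests on lists, and the classification becomes a
   finite computation over all 1024 candidate edge lists. *)

Section Subseqs.
Variable T : Type.

Fixpoint subseqs (s : seq T) : seq (seq T) :=
  if s is x :: s' then [seq x :: t | t <- subseqs s'] ++ subseqs s' else [:: [::]].

Definition ksubseqs (k : nat) (s : seq T) : seq (seq T) :=
  [seq t <- subseqs s | size t == k].

End Subseqs.

Lemma mem_subseqs (T : eqType) (s t : seq T) : (t \in subseqs s) = subseq t s.
Proof.
elim: s t => [|x s IHs] [|y t] //=; rewrite mem_cat IHs ?sub0seq ?orbT //.
case: eqP => [->|neq_yx].
  rewrite mem_map; last by move=> ? ? [].
  by rewrite IHs; apply/orb_idr/subseq_trans/subseq_cons.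
by apply/orb_idl => /mapP [? _ [/neq_yx]].
Qed.

Lemma set_map (T T' : finType) (f : T -> T') (s : seq T) :
  [set:: map f s] = f @: [set:: s].
Proof.
apply/setP => y; rewrite inE; apply/mapP/imsetP => -[x xs ->]; exists x => //.
  by rewrite inE.
by move: xs; rewrite inE.
Qed.

Lemma set_seq3 (T : finType) (a b c : T) : [set:: [:: a; b; c]] = [set a; b; c].
Proof. by apply/setP => x; rewrite !inE orbA. Qed.

Lemma K43minus_copy (V : finType) (H : {set {set V}}) (a b c d : V) :
  uniq [:: a; b; c; d] ->
  [set a; b; c] \in H -> [set a; b; d] \in H -> [set a; c; d] \in H ->
  contains_copy K43minus H.
Proof.
move=> abcd abc abd acd; pose f (i : 'I_4) := nth a [:: a; b; c; d] i.
have [f0 f1 f2 f3] : [/\ f (v4 0) = a, f (v4 1) = b, f (v4 2) = c & f (v4 3) = d].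
  by rewrite /f /v4 !inordK.
exists f; split; first by move=> i j /eqP; rewrite nth_uniq // => /eqP /val_inj.
move=> e; rewrite !inE => /orP [/orP [] | ] /eqP ->;
  by rewrite /edge_img !imsetU !imset_set1 ?f0 ?f1 ?f2 ?f3.
Qed.

Lemma is_3graph_set_of_lists (T : finType) (L : seq (seq T)) :
  all (fun w => uniq w && (size w == 3)) L -> is_3graph [set:: [seq [set:: w] | w <- L]].
Proof.
move=> /allP L3 e; rewrite inE => /mapP [w /L3 /andP [uw /eqP sw] ->].
by rewrite cardsE -sw; apply/card_uniqP.
Qed.

(* The vertices are listed by an explicit enumeration [vs] rather than by
   [enum T], which is locked: for T = 'I_5 all the boolean tests below must
   evaluate under vm_compute. *)
Section ListGraphs.
Variables (T : finType) (vs : seq T).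

Definition canon (u : seq T) : seq T := [seq x <- vs | x \in u].

Definition has_edge (s : seq (seq T)) (u : seq T) : bool := canon u \in s.

Definition represents (s : seq (seq T)) (G : {set {set T}}) : Prop :=
  forall u, uniq u -> size u = 3 -> has_edge s u = ([set:: u] \in G).

Definition edge_list (G : {set {set T}}) : seq (seq T) :=
  [seq t <- ksubseqs 3 vs | [set:: t] \in G].

Definition shadow_completeb (s : seq (seq T)) : bool :=
  all (fun p => has (fun t => all (mem t) p) s) (ksubseqs 2 vs).

(* A copy of K_4^{3-} centred at a is a triangle t in the link of a. *)
Definition K43minus_freeb (s : seq (seq T)) : bool :=
  all (fun a => all (fun t => (a \in t) || ~~ all (fun p => has_edge s (a :: p)) (ksubseqs 2 t))
                    (ksubseqs 3 vs)) vs.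

Definition relabel (p : seq T) (x : T) : T := nth x p (index x vs).

Definition isomorphicb (s s' : seq (seq T)) : bool :=
  has (fun p => all (fun t => has_edge s t == has_edge s' (map (relabel p) t)) (ksubseqs 3 vs))
      (permutations vs).

Hypotheses (vs_uniq : uniq vs) (mem_vs : forall x, x \in vs).

Lemma mem_canon u x : (x \in canon u) = (x \in u).
Proof. by rewrite mem_filter mem_vs andbT. Qed.

Lemma set_canon u : [set:: canon u] = [set:: u].
Proof. by apply/setP => x; rewrite !inE mem_canon. Qed.

Lemma canon_uniq u : uniq (canon u).
Proof. exact: filter_uniq. Qed.

Lemma canon_ksubseqs u : uniq u -> canon u \in ksubseqs (size u) vs.
Proof.
move=> uu; rewrite mem_filter mem_subseqs filter_subseq andbT.
by rewrite (perm_size (uniq_perm (canon_uniq u) uu (mem_canon u))).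
Qed.

Lemma eq_canon u w : (canon u == canon w) = ([set:: u] == [set:: w]).
Proof.
apply/eqP/eqP => [E | E].
  by apply/setP => x; rewrite !inE -(mem_canon u) -(mem_canon w) E.
by apply: eq_filter => x; move/setP/(_ x): E; rewrite !inE.
Qed.

Lemma edge_list_represents G : represents (edge_list G) G.
Proof.
move=> u uu su.
by rewrite /has_edge /edge_list mem_filter set_canon -su canon_ksubseqs ?andbT.
Qed.

Lemma edge_list_subseqs G : edge_list G \in subseqs (ksubseqs 3 vs).
Proof. by rewrite mem_subseqs filter_subseq. Qed.

Lemma canon_lists_represent (L : seq (seq T)) :
  represents (map canon L) [set:: [seq [set:: w] | w <- L]].
Proof.
move=> u _ _; rewrite /has_edge inE.
apply/mapP/mapP => -[w wL /eqP E]; exists w => //; apply/eqP.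
  by rewrite -eq_canon.
by rewrite eq_canon.
Qed.

Lemma represents_shadow_completeb G s :
  is_3graph G -> represents s G -> shadow_complete G -> shadow_completeb s.
Proof.
move=> G3 sG Gsh; apply/allP => p; rewrite mem_filter mem_subseqs.
case/andP=> /eqP + /subseq_uniq/(_ vs_uniq); case: p => [|x [|y []]] // _.
rewrite /= inE andbT => xy; have [e eG /andP [xe ye]] := Gsh x y xy.
apply/hasP; exists (canon (enum e)); last by rewrite /= !mem_canon !mem_enum xe ye.
by have := sG _ (enum_uniq (mem e)); rewrite -cardE G3 // set_enum eG => /(_ erefl).
Qed.

Lemma represents_K43minus_freeb G s :
  represents s G -> free_of K43minus G -> K43minus_freeb s.
Proof.
move=> sG Gfree; apply/allP => a _; apply/allP => t; rewrite mem_filter mem_subseqs.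
case/andP=> /eqP + /subseq_uniq/(_ vs_uniq); case: t => [|b [|c [|d []]]] // _ ubcd.
have [//|a_bcd] := boolP (a \in [:: b; c; d]).
have abcd : uniq [:: a; b; c; d] by exact/andP.
have [uabc uabd uacd] : [/\ uniq [:: a; b; c], uniq [:: a; b; d] & uniq [:: a; c; d]].
  by split; [exact: (mask_uniq abcd [:: true; true; true; false])
            | exact: (mask_uniq abcd [:: true; true; false; true])
            | exact: (mask_uniq abcd [:: true; false; true; true])].
apply/negP => /= /and4P [abc abd acd _]; apply: Gfree.
move: abc abd acd; rewrite !sG // !set_seq3; exact: K43minus_copy.
Qed.

Lemma relabel_inj p : perm_eq p vs -> injective (relabel p).
Proof.
move=> pvs x y; rewrite /relabel.
have ltp z : index z vs < size p by rewrite (perm_size pvs) index_mem.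
rewrite (set_nth_default x y (ltp y)) => /eqP.
rewrite nth_uniq ?(perm_uniq pvs) // => /eqP /(congr1 (nth x vs)).
by rewrite !nth_index.
Qed.

Lemma represents_isomorphic G C s s' : is_3graph G -> is_3graph C ->
  represents s G -> represents s' C -> isomorphicb s s' -> isomorphic G C.
Proof.
move=> G3 C3 sG s'C /hasP [p]; rewrite mem_permutations => pvs /allP iso_p.
have f_inj := relabel_inj pvs; set f := relabel p in f_inj iso_p.
exists f; split=> [|e]; first exact: injF_bij.
have [e3 | en3] := eqVneq #|e| 3; last first.
  have -> : (e \in G) = false by apply: contraNF en3 => /G3 ->.
  by apply: contraNF en3 => /C3; rewrite /edge_img card_imset // => ->.
set t := canon (enum e).
have t3 : t \in ksubseqs 3 vs by rewrite -e3 cardE; exact: canon_ksubseqs (enum_uniq _).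
have st : size t = 3 by move: t3; rewrite mem_filter => /andP [/eqP].
have et : [set:: t] = e by rewrite set_canon set_enum.
have := iso_p t t3; rewrite sG ?canon_uniq // s'C ?size_map ?map_inj_uniq ?canon_uniq //.
by rewrite set_map et => /eqP.
Qed.

End ListGraphs.

Section Pullback.
Variables (V W : finType) (h : W -> V).

Definition pullback (H : {set {set V}}) : {set {set W}} := [set e : {set W} | h @: e \in H].

Lemma pullback_3graph H : injective h -> is_3graph H -> is_3graph (pullback H).
Proof. by move=> h_inj H3 e; rewrite inE => /H3; rewrite card_imset. Qed.

Lemma pullback_free (U : finType) (F : {set {set U}}) H :
  injective h -> free_of F H -> free_of F (pullback H).
Proof.
move=> h_inj Hfree [f [f_inj fF]]; apply: Hfree; exists (h \o f).
by split=> [|e /fF]; [exact: inj_comp | rewrite inE /edge_img imset_comp].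
Qed.

Lemma pullback_shadow H : bijective h -> shadow_complete H -> shadow_complete (pullback H).
Proof.
move=> [h' hK h'K] Hsh x y xy.
have [E EH /andP [xE yE]] := Hsh (h x) (h y) (contra_neq (@can_inj _ _ _ _ hK x y) xy).
exists (h' @: E); first by rewrite inE -imset_comp (eq_imset _ h'K) imset_id.
by rewrite -(hK x) -(hK y) !imset_f.
Qed.

Lemma isomorphic_pullback (U : finType) H (C : {set {set U}}) :
  bijective h -> isomorphic (pullback H) C -> isomorphic H C.
Proof.
move=> [h' hK h'K] [f [f_bij fC]]; exists (f \o h'); split.
  exact: bij_comp f_bij (Bijective h'K hK).
by move=> e; rewrite /edge_img imset_comp fC inE -imset_comp (eq_imset _ h'K) imset_id.
Qed.

End Pullback.

Lemma ord_bij_of_card (V : finType) n : #|V| = n -> exists h : 'I_n -> V, bijective h.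
Proof. by move=> <-; exists enum_val; exact: enum_val_bij. Qed.

(* [inord], hence [v5], is stuck under vm_compute (it goes through the opaque
   [idP]); [ord5] reduces. *)
Definition ord5 (i : nat) : 'I_5 := Ordinal (ltn_pmod i (isT : 0 < 5)).

Definition vertices5 : seq 'I_5 := map ord5 (iota 0 5).

Lemma vertices5_uniq : uniq vertices5.
Proof. by []. Qed.

Lemma mem_vertices5 x : x \in vertices5.
Proof. by case: x => -[|[|[|[|[|]]]]]. Qed.

Lemma v5_ord5 i : i < 5 -> v5 i = ord5 i.
Proof. by move=> lti; apply: val_inj; rewrite /= inordK // modn_small. Qed.

Definition C5_lists : seq (seq 'I_5) :=
  [:: [:: ord5 0; ord5 1; ord5 2]; [:: ord5 1; ord5 2; ord5 3]; [:: ord5 2; ord5 3; ord5 4];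
      [:: ord5 0; ord5 3; ord5 4]; [:: ord5 0; ord5 1; ord5 4]].

Definition F32_lists : seq (seq 'I_5) :=
  [:: [:: ord5 0; ord5 1; ord5 2]; [:: ord5 0; ord5 3; ord5 4]; [:: ord5 1; ord5 3; ord5 4];
      [:: ord5 2; ord5 3; ord5 4]].

Lemma C5_lists_set : C5 = [set:: [seq [set:: w] | w <- C5_lists]].
Proof. by apply/setP => e; rewrite /C5 !v5_ord5 // !inE /= !set_seq3 !orbA. Qed.

Lemma F32_lists_set : F32 = [set:: [seq [set:: w] | w <- F32_lists]].
Proof. by apply/setP => e; rewrite /F32 !v5_ord5 // !inE /= !set_seq3 !orbA. Qed.

Lemma five_vertex_check :
  all (fun s => isomorphicb vertices5 s (map (canon vertices5) C5_lists)
                || isomorphicb vertices5 s (map (canon vertices5) F32_lists))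
      [seq s <- subseqs (ksubseqs 3 vertices5)
         | shadow_completeb vertices5 s && K43minus_freeb vertices5 s].
Proof. vm_cast_no_check (erefl true). Qed.

Lemma classification_ord5 (G : {set {set 'I_5}}) :
  is_3graph G -> free_of K43minus G -> shadow_complete G ->
  isomorphic G C5 \/ isomorphic G F32.
Proof.
move=> G3 Gfree Gsh.
have sG := edge_list_represents vertices5_uniq mem_vertices5 G.
have := allP five_vertex_check (edge_list vertices5 G).
rewrite mem_filter edge_list_subseqs (represents_K43minus_freeb vertices5_uniq sG Gfree).
rewrite (represents_shadow_completeb vertices5_uniq mem_vertices5 G3 sG Gsh).
case/(_ isT)/orP => iso_G; [left; rewrite C5_lists_set | right; rewrite F32_lists_set];
  apply: (represents_isomorphic vertices5_uniq mem_vertices5 G3 _ sG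
            (canon_lists_represent mem_vertices5 _) iso_G);
  by apply: is_3graph_set_of_lists.
Qed.

Unset Implicit Arguments.

Theorem lemma2p12 (V : finType) (H : {set {set V}}) :
  #|V| = 5 -> is_3graph H -> free_of K43minus H -> shadow_complete H ->
  isomorphic H C5 \/ isomorphic H F32.
Proof.
move=> /ord_bij_of_card [h h_bij] H3 Hfree Hsh; have h_inj := bij_inj h_bij.
have [iso | iso] := classification_ord5 (pullback_3graph h_inj H3)
  (pullback_free h_inj Hfree) (pullback_shadow h_bij Hsh).
  by left; exact: isomorphic_pullback iso.
by right; exact: isomorphic_pullback iso.
Qed.
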